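(* For every $a\in\{1,\dots,n\}$, the following identities hold in $\mathrm{Cl}_q(n,k)$: \[ \psi_a \omega_a^{2k} = q^{-2k}\psi_a,\qquad \psi_a^*\omega_a^{2k}=\psi_a^*,\qquad \omega_a^{-k} = (q^{2k}+1)\omega_a^k - q^{2k}\omega_a^{3k}. \]
   Context: Let $\mathbb{k}$ be a field of characteristic different from $2$, let $q\in\mathbb{k}^\times$, and let $n,k$ be positive integers. The quantum Clifford algebra $\mathrm{Cl}_q(n,k)$ is the unital associative $\mathbb{k}$-algebra generated by $\psi_a,\psi_a^*,\omega_a,\omega_a^{-1}$ for $a\in\{1,\dots,n\}$, subject to the relations (for all $a,b\in\{1,\dots,n\}$): $\omega_a\omega_b=\omega_b\omega_a$; $\omega_a\omega_a^{-1}=1$; $\omega_a\psi_b=q^{\delta_{ab}}\psi_b\omega_a$; $\omega_a\psi_b^*=q^{-\delta_{ab}}\psi_b^*\omega_a$; $\psi_a\psi_b+\psi_b\psi_a=0$; $\psi_a^*\psi_b^*+\psi_b^*\psi_a^*=0$; $\psi_a\psi_a^*+q^k\psi_a^*\psi_a=\omega_a^{-k}$; $\psi_a\psi_a^*+q^{-k}\psi_a^*\psi_a=\omega_a^{k}$; and $\psi_a\psi_b^*+\psi_b^*\psi_a=0$ if $a\neq b$. *)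

From HB Require Import structures.
From mathcomp Require Import all_boot all_order all_algebra.
Set Implicit Arguments. Unset Strict Implicit. Unset Printing Implicit Defensive.
Import GRing.Theory.
Local Open Scope ring_scope.

(* An identity holds in
   the presented algebra Cl_q(n,k) iff it holds for every such family in every
   F-algebra (universal property of the presentation). *)
Definition Clq_relations (F : fieldType) (A : algType F) (n k : nat) (q : F)
    (psi psis om omi : 'I_n -> A) : Prop :=
  (forall a b, om a * om b = om b * om a) /\
      (forall a, om a * omi a = 1) /\
      (forall a b, om a * psi b = (if a == b then q else 1) *: (psi b * om a)) /\
      (forall a b, om a * psis b = (if a == b then q^-1 else 1) *: (psis b * om a)) /\
      (forall a b, psi a * psi b + psi b * psi a = 0) /\
      (forall a b, psis a * psis b + psis b * psis a = 0) /\
      (forall a, psi a * psis a + q ^+ k *: (psis a * psi a) = omi a ^+ k) /\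
      (forall a, psi a * psis a + q ^- k *: (psis a * psi a) = om a ^+ k) /\
      (forall a b, a != b -> psi a * psis b + psis b * psi a = 0).

(* Write p = psi_a, s = psi_a^*, c = q^k, w = omega_a^k and w' = omega_a^{-k}.
   The anticommutation relations give p^2 = s^2 = 0, and the two remaining
   relations express w and w' as ps + c^{-1} sp and ps + c sp.  Hence
   p w = c^{-1} psp, p w' = c psp and s w = s w' = sps; combined with
   w w' = 1 these give pspsp = p and spsps = s, from which p w^2 = c^{-2} p
   and s w^2 = s follow.  Then w^3 = (ps + c^{-1} sp) w^2 = ps + c^{-3} sp,
   and w' is the stated combination of w and w^3. *)
From HB Require Import structures.
From mathcomp Require Import all_boot all_order all_algebra.
From mathcomp Require Import ring.
Set Implicit Arguments.
Unset Strict Implicit.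
Unset Printing Implicit Defensive.

Import GRing.Theory.
Local Open Scope ring_scope.

Lemma expr_rinv (R : pzSemiRingType) (x y : R) (m : nat) :
  x * y = 1 -> x ^+ m * y ^+ m = 1.
Proof.
move=> xy1; elim: m => [|m IHm]; first by rewrite !expr0 mulr1.
by rewrite exprS exprSr mulrA -(mulrA x) IHm mulr1.
Qed.

Lemma addrr_eq0 (F : fieldType) (A : lmodType F) (x : A) :
  (2%:R : F) != 0 -> x + x = 0 -> x = 0.
Proof.
move=> h2 xx0; have : (2%:R : F) *: x = 0 by rewrite scaler_nat mulr2n xx0.
by move/(congr1 ( *:%R (2%:R : F)^-1)); rewrite scalerA mulVf // scale1r scaler0.
Qed.

Section CliffordPair.

Variables (F : fieldType) (A : algType F) (c : F) (p s w w' : A).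
Hypotheses (c_neq0 : c != 0) (pp0 : p * p = 0) (ss0 : s * s = 0).
Hypotheses (def_w : p * s + c^-1 *: (s * p) = w)
           (def_w' : p * s + c *: (s * p) = w') (ww' : w * w' = 1).

Lemma psi_mulw : p * w = c^-1 *: (p * s * p).
Proof. by rewrite -def_w mulrDr mulrA pp0 mul0r add0r -scalerAr mulrA. Qed.

Lemma psi_mulw' : p * w' = c *: (p * s * p).
Proof. by rewrite -def_w' mulrDr mulrA pp0 mul0r add0r -scalerAr mulrA. Qed.

Lemma psis_mulw : s * w = s * p * s.
Proof. by rewrite -def_w mulrDr -scalerAr !mulrA ss0 mul0r scaler0 addr0. Qed.

Lemma psis_mulw' : s * w' = s * p * s.
Proof. by rewrite -def_w' mulrDr -scalerAr !mulrA ss0 mul0r scaler0 addr0. Qed.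

Lemma psi_psps : p * s * p * s * p = p.
Proof.
rewrite -[RHS]mulr1 -ww' mulrA psi_mulw -scalerAl -!mulrA psi_mulw'.
by rewrite !scalerAr scalerA mulVf // scale1r !mulrA.
Qed.

Lemma psis_psps : s * p * s * p * s = s.
Proof. by rewrite -[RHS]mulr1 -ww' mulrA psis_mulw -!mulrA psis_mulw' !mulrA. Qed.

Lemma psi_mulw2 : p * w ^+ 2 = c ^- 2 *: p.
Proof.
rewrite expr2 mulrA psi_mulw -scalerAl -!mulrA psi_mulw -!scalerAr scalerA !mulrA.
by rewrite psi_psps expr2 invfM.
Qed.

Lemma psis_mulw2 : s * w ^+ 2 = s.
Proof. by rewrite expr2 mulrA psis_mulw -!mulrA psis_mulw !mulrA psis_psps. Qed.

Lemma w_cube : w ^+ 3 = p * s + c ^- 3 *: (s * p).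
Proof.
rewrite exprS -{1}def_w mulrDl -mulrA psis_mulw2 -scalerAl -mulrA psi_mulw2.
by rewrite -scalerAr scalerA -invfM -exprS.
Qed.

Lemma w'_combination : w' = (c ^+ 2 + 1) *: w - c ^+ 2 *: w ^+ 3.
Proof.
rewrite w_cube -def_w -def_w' !scalerDr !scalerA opprD addrACA -scalerBl.
rewrite -scalerBl addrAC subrr add0r scale1r; congr (_ + _ *: _).
by field.
Qed.

End CliffordPair.

Theorem lemma3p2 (F : fieldType) (A : algType F) (n k : nat) (q : F)
    (psi psis om omi : 'I_n -> A) :
  (2%:R : F) != 0 -> q != 0 -> (0 < n)%N -> (0 < k)%N ->
  @Clq_relations F A n k q psi psis om omi ->
  forall a : 'I_n,
    [/\ psi a * om a ^+ (2 * k) = q ^- (2 * k) *: psi a,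
        psis a * om a ^+ (2 * k) = psis a &
        omi a ^+ k = (q ^+ (2 * k) + 1) *: om a ^+ k - q ^+ (2 * k) *: om a ^+ (3 * k)].
Proof.
move=> h2 q0 _ _ [_ [om_omi [_ [_ [psi_anti [psis_anti [rel' [rel _]]]]]]]] a.
have c0 : q ^+ k != 0 by rewrite expf_neq0.
have pp0 := addrr_eq0 h2 (psi_anti a a).
have ss0 := addrr_eq0 h2 (psis_anti a a).
have ww' := expr_rinv k (om_omi a).
rewrite ![(_ * k)%N]mulnC !exprM.
split.
- exact: psi_mulw2 c0 pp0 (rel a) (rel' a) ww'.
- exact: psis_mulw2 ss0 (rel a) (rel' a) ww'.
- exact: w'_combination c0 pp0 ss0 (rel a) (rel' a) ww'.
Qed.
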